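(* Let $N\ge 2$ be an integer and $\tau>0$. For $t\in\{0,\tau,2\tau,\dots\}$ let $u_j^t=u(j,t)$, $j=0,\dots,N$, be defined by prescribed initial values $u(j,0)$, the Dirichlet boundary condition $u_0^t=u_N^t=0$ for all $t$, and the iteration, for $j=1,\dots,N-1$, $$u_j^{t+\tau}=u_j^t+\frac{u_j^tu_{j-1}^t}{2}\bigl(u_j^t+u_{j-1}^t-1\bigr)\bigl(u_{j-1}^t-u_j^t\bigr)+\frac{u_j^tu_{j+1}^t}{2}\bigl(u_j^t+u_{j+1}^t-1\bigr)\bigl(u_{j+1}^t-u_j^t\bigr).$$ Suppose $$\tfrac12\le u(1,0)\le u(2,0)\le\cdots\le u(N-1,0)\le 1.$$ Then for all $t\in\{\tau,2\tau,\dots\}$, $$\tfrac12\le u(1,t)\le u(2,t)\le\cdots\le u(N-1,t)\le 1.$$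
   Context: Aggregation–diffusion lattice model on the grid points $x_j=j/N$ with time step $\tau$. *)

From mathcomp Require Import all_boot all_order all_algebra.
From mathcomp Require Import reals.
Set Implicit Arguments. Unset Strict Implicit. Unset Printing Implicit Defensive.
Import Order.TTheory GRing.Theory Num.Theory.
Local Open Scope ring_scope.

Definition lattice_step (R : realType) (v : nat -> R) (j : nat) : R :=
  v j
  + v j * v j.-1 / 2 * (v j + v j.-1 - 1) * (v j.-1 - v j)
  + v j * v j.+1 / 2 * (v j + v j.+1 - 1) * (v j.+1 - v j).

Definition ordered_profile (R : realType) (N : nat) (v : nat -> R) : Prop :=
  [/\ 1 / 2 <= v 1%N,
      (forall j : nat, (1 <= j)%N -> (j < N.-1)%N -> v j <= v j.+1)
    & v N.-1 <= 1].

From mathcomp Require Import all_boot all_order all_algebra.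
From mathcomp Require Import reals.
From mathcomp Require Import ring lra zify.
Set Implicit Arguments. Unset Strict Implicit. Unset Printing Implicit Defensive.
Import Order.TTheory GRing.Theory Num.Theory Order.NatMonotonyTheory.
Local Open Scope ring_scope.

(* The scheme is conservative: u_j changes by the difference of the fluxes
   F(u_{j-1}, u_j) and F(u_j, u_{j+1}), with F(x,y) = xy(x+y-1)(y-x)/2, and
   the Dirichlet condition makes both boundary fluxes vanish.  For
   1/2 <= x <= y <= 1 one has 0 <= F(x,y) <= (y-x)/2, since xy(x+y-1) lies in
   [0,1].  Nonnegative fluxes keep u_1 >= 1/2 and u_{N-1} <= 1, and the gap
   u_{j+1} - u_j loses at most 2 F(u_j, u_{j+1}) <= u_{j+1} - u_j while the
   outer fluxes only enlarge it. *)

Section Flux.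
Variable R : realType.
Implicit Types x y : R.

Definition flux x y : R := x * y * (x + y - 1) * (y - x) / 2.

Lemma lattice_stepE (v : nat -> R) j :
  lattice_step v j = v j - flux (v j.-1) (v j) + flux (v j) (v j.+1).
Proof. by rewrite /lattice_step /flux; ring. Qed.

Lemma flux0l y : flux 0 y = 0.
Proof. by rewrite /flux !mul0r. Qed.

Lemma flux0r x : flux x 0 = 0.
Proof. by rewrite /flux mulr0 !mul0r. Qed.

Lemma flux_ge0 x y : 1 / 2 <= x -> x <= y -> y <= 1 -> 0 <= flux x y.
Proof.
move=> x_ge y_ge_x y_le; rewrite /flux; apply: divr_ge0 => //.
by do 3 (apply: mulr_ge0; last lra); lra.
Qed.

Lemma flux_le_half_gap x y :
  1 / 2 <= x -> x <= y -> y <= 1 -> flux x y <= (y - x) / 2.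
Proof.
move=> x_ge y_ge_x y_le.
have -> : flux x y = (y - x) / 2 * (x * y * (x + y - 1)) by rewrite /flux; ring.
apply: ler_piMr; first lra.
by apply: mulr_ile1; try lra; [apply: mulr_ge0 | apply: mulr_ile1]; lra.
Qed.

End Flux.

Section OrderedProfile.
Variables (R : realType) (N : nat).
Hypothesis N_ge2 : (2 <= N)%N.
Implicit Type v : nat -> R.

Let interior : {pred nat} := [pred j | (1 <= j <= N.-1)%N].

Lemma ordered_profile_nondec v : ordered_profile N v ->
  {in interior &, {homo v : i j / (i <= j)%N >-> i <= j}}.
Proof.
case=> _ v_nondec _; apply: nondecn_inP => [i j|i]; rewrite !inE.
  by move=> /andP[? ?] /andP[? ?] k; rewrite !ltEnat inE /= => /andP[? ?]; lia.
by move=> /andP[? _] /andP[_ ?]; apply: v_nondec => //; lia.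
Qed.

Lemma ordered_profile_bounds v j : ordered_profile N v ->
  (1 <= j <= N.-1)%N -> 1 / 2 <= v j <= 1.
Proof.
move=> v_ord j_int; have v_nondec := ordered_profile_nondec v_ord.
case: v_ord => v1_ge _ vN_le; apply/andP; split.
- by apply: le_trans v1_ge (v_nondec _ _ _ _ _); rewrite ?inE; lia.
- by apply: le_trans (v_nondec _ _ _ _ _) vN_le; rewrite ?inE; lia.
Qed.

Lemma eq_ordered_profile v w : {in interior, v =1 w} ->
  ordered_profile N v -> ordered_profile N w.
Proof.
move=> vw [v1_ge v_nondec vN_le].
split; rewrite -?vw ?inE //; try lia.
by move=> j j_ge j_lt; rewrite -!vw ?inE; [exact: v_nondec | lia | lia].
Qed.

Lemma ordered_profile_step v : v 0%N = 0 -> v N = 0 ->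
  ordered_profile N v -> ordered_profile N (lattice_step v).
Proof.
move=> v0 vN v_ord.
have bnd j : (1 <= j <= N.-1)%N -> 1 / 2 <= v j <= 1.
  exact: ordered_profile_bounds.
have nondec j : (1 <= j < N.-1)%N -> v j <= v j.+1.
  by move=> j_int; apply: (ordered_profile_nondec v_ord); rewrite ?inE; lia.
have flux_last : flux (v N.-1) (v N.-1.+1) = 0.
  by rewrite prednK ?vN ?flux0r //; lia.
have flux_nneg j : (j < N)%N -> 0 <= flux (v j) (v j.+1).
  case: j => [_|j j_lt]; first by rewrite v0 flux0l.
  have [->|j_ne] := eqVneq j.+1 N.-1; first by rewrite flux_last.
  have /andP[? _] := bnd j.+1 ltac:(lia); have /andP[_ ?] := bnd j.+2 ltac:(lia).
  by apply: flux_ge0 => //; apply: nondec; lia.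
case: v_ord => v1_ge _ vN_le; split.
- rewrite lattice_stepE v0 flux0l; have := flux_nneg 1%N N_ge2; lra.
- move=> j j_ge j_lt; rewrite !lattice_stepE /=.
  have /andP[? _] := bnd j ltac:(lia); have /andP[_ ?] := bnd j.+1 ltac:(lia).
  have : flux (v j) (v j.+1) <= (v j.+1 - v j) / 2.
    by apply: flux_le_half_gap => //; apply: nondec; lia.
  have := flux_nneg j.-1 ltac:(lia); rewrite prednK //.
  have := flux_nneg j.+1 ltac:(lia); lra.
- rewrite lattice_stepE flux_last; have := flux_nneg N.-1.-1 ltac:(lia).
  by rewrite prednK; [lra | lia].
Qed.

End OrderedProfile.

Theorem theorem3p4 (R : realType) (N : nat) (tau : R) (u : nat -> R -> R) :
  (2 <= N)%N -> 0 < tau ->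
  (forall k : nat, u 0%N (k%:R * tau) = 0 /\ u N (k%:R * tau) = 0) ->
  (forall (k j : nat), (1 <= j)%N -> (j <= N.-1)%N ->
     u j (k.+1%:R * tau) = lattice_step (fun i => u i (k%:R * tau)) j) ->
  ordered_profile N (fun j => u j 0) ->
  forall k : nat, (1 <= k)%N -> ordered_profile N (fun j => u j (k%:R * tau)).
Proof.
move=> N_ge2 _ u_bd u_step u0_ord.
suff u_ord k : ordered_profile N (fun j => u j (k%:R * tau)) by move=> k _.
elim: k => [|k IHk]; first by rewrite mul0r.
have [u0 uN] := u_bd k.
apply: (eq_ordered_profile N_ge2 _ (ordered_profile_step N_ge2 u0 uN IHk)).
by move=> j /andP[j_ge j_le]; rewrite u_step.
Qed.
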